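(* In the one-shot linear delivery model described in the context, consider a single communication block in which a set $\{\mathbf{w}_{n_l,f_l}\}_{l=1}^L$ of $L$ packets is scheduled to be transmitted together to $L$ distinct receivers (packet $l$ intended for the $l$-th of these receivers). In order for each receiver to successfully decode its desired packet, necessarily $$L\le\min_{l\in[L]}\big(|\mathcal{T}_l|+|\mathcal{R}_l|\big),$$ where $\mathcal{T}_l$ and $\mathcal{R}_l$ denote the sets of transmitters and of receivers, respectively, that have cached the packet $\mathbf{w}_{n_l,f_l}$.
   Context: Network: transmitters $\text{Tx}_1,\dots,\text{Tx}_{K_T}$, receivers $\text{Rx}_1,\dots,\text{Rx}_{K_R}$, channel $Y_j=\sum_i h_{ji}X_i+Z_j$ with fixed complex gains $h_{ji}$ and Gaussian noise. Each transmitter and receiver has cached a set of whole packets of a file library. Each packet $\mathbf{w}_{n,f}$ is encoded into a coded packet $\tilde{\mathbf{w}}_{n,f}\in\mathbb{C}^{\tilde B}$ carrying one degree of freedom. In a block where a set $\mathcal{D}$ of packets is scheduled, transmitter $\text{Tx}_i$ sends $\mathbf{x}_i=\sum_{\mathbf{w}_{n,f}\in\mathcal{D}\text{ cached at }\text{Tx}_i} v_{i,n,f}\tilde{\mathbf{w}}_{n,f}$ with complex coefficients $v_{i,n,f}$; a scheduled receiver $\text{Rx}_j$ receives $\mathbf{y}_j=\sum_i h_{ji}\mathbf{x}_i+\mathbf{z}_j$ and forms a linear combination of $\mathbf{y}_j$ and the coded packets it has cached. Decoding is successful if this linear combination equals its desired coded packet plus $\mathbf{z}_j$ (all interference removed)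.
   Formalization: The channel gains $h_{ji}$ are generic, every square submatrix of the receiver-by-transmitter gain matrix being nonsingular, and the l-th receiver has not itself cached its desired packet $\mathbf{w}_{n_l,f_l}$. Each condition added here is assumed in the paper as well or is needed for the statement above to hold. *)

From HB Require Import structures.
From mathcomp Require Import all_boot all_order all_algebra.
From mathcomp Require Import complex.
Set Implicit Arguments. Unset Strict Implicit. Unset Printing Implicit Defensive.
Import Order.TTheory GRing.Theory Num.Theory.
Local Open Scope ring_scope.

(* Genericity of the channel matrix h (rows: receivers, columns: transmitters):
   every square submatrix is nonsingular. *)
Definition generic_channel (C : fieldType) (KR KT : nat) (h : 'M[C]_(KR, KT)) :=
  forall (k : nat) (r : 'I_k -> 'I_KR) (t : 'I_k -> 'I_KT),
    injective r -> injective t ->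
    \det (\matrix_(a < k, b < k) h (r a) (t b)) != 0.

(* Coefficient of the coded packet p in the signal x_i of transmitter i, when the
   scheduled packets are pk 0, ..., pk (L-1) and v are the precoding coefficients:
   x_i = sum_{scheduled p cached at Tx_i} v i p * w~_p. *)
Definition tx_coef (C : fieldType) (KT : nat) (P : finType)
    (cacheT : 'I_KT -> {set P}) (L : nat) (pk : 'I_L -> P)
    (v : 'I_KT -> P -> C) (i : 'I_KT) (p : P) : C :=
  if (p \in cacheT i) && (p \in [set pk l | l : 'I_L]) then v i p else 0.

(* Coefficient of w~_p in y_j = sum_i h_{ji} x_i + z_j. *)
Definition rx_coef (C : fieldType) (KR KT : nat) (P : finType)
    (h : 'M[C]_(KR, KT)) (cacheT : 'I_KT -> {set P}) (L : nat) (pk : 'I_L -> P)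
    (v : 'I_KT -> P -> C) (j : 'I_KR) (p : P) : C :=
  \sum_(i < KT) h j i * tx_coef cacheT pk v i p.

(* Rx_j successfully decodes packet q: there is a linear combination
   u * y_j + sum_{p cached at Rx_j} c p * w~_p that equals w~_q + z_j,
   i.e. the noise coefficient u is 1 and the coefficient of each coded packet p
   is 1 if p = q and 0 otherwise (coded packets are independent symbols). *)
Definition decodes (C : fieldType) (KR KT : nat) (P : finType)
    (h : 'M[C]_(KR, KT)) (cacheT : 'I_KT -> {set P}) (cacheR : 'I_KR -> {set P})
    (L : nat) (pk : 'I_L -> P) (v : 'I_KT -> P -> C) (j : 'I_KR) (q : P) : Prop :=
  exists (u : C) (c : P -> C),
    u = 1 /\
    forall p : P,
      u * rx_coef h cacheT pk v j p + (if p \in cacheR j then c p else 0)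
      = (p == q)%:R.

(* Fix the packet q scheduled for receiver l, and let T and R be the
   transmitters and receivers caching it.  Every other scheduled receiver that
   does not cache q must cancel q from its received signal, so the effective
   precoder (v i q)_{i in T} lies in the kernel of the submatrix of h with
   these rows and the columns T.  If L > |T| + |R| there are at least |T| such
   receivers; by genericity that submatrix contains a nonsingular |T| x |T|
   block, so the precoder of q vanishes and receiver l cannot see q at all. *)

From HB Require Import structures.
From mathcomp Require Import all_boot all_order all_algebra.
From mathcomp Require Import complex.
From mathcomp Require Import zify.
Set Implicit Arguments. Unset Strict Implicit. Unset Printing Implicit Defensive.
Import Order.TTheory GRing.Theory Num.Theory.
Local Open Scope ring_scope.
Local Open Scope complex_scope.

Lemma card_preimset_leq (aT rT : finType) (f : aT -> rT) (A : {set rT}) :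
  injective f -> (#|f @^-1: A| <= #|A|)%N.
Proof.
move=> injf; rewrite -(card_imset _ injf); apply: subset_leq_card.
by apply/subsetP => _ /imsetP[x + ->]; rewrite inE.
Qed.

Lemma generic_channel_zero_forcing (C : fieldType) (KR KT : nat)
    (h : 'M[C]_(KR, KT)) (T : {set 'I_KT}) (J : {set 'I_KR}) (x : 'I_KT -> C) :
  generic_channel h -> (#|T| <= #|J|)%N ->
  (forall j, j \in J -> \sum_(i in T) h j i * x i = 0) ->
  forall i, i \in T -> x i = 0.
Proof.
move=> hgen TleJ Jzero i Ti.
pose r (a : 'I_#|T|) := @enum_val _ (mem J) (widen_ord TleJ a).
pose t (b : 'I_#|T|) := @enum_val _ (mem T) b.
have r_inj : injective r.
  by move=> a a' /enum_val_inj /(congr1 val) /= ?; apply: val_inj.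
pose M := \matrix_(a < #|T|, b < #|T|) h (r a) (t b).
pose y := \col_(b < #|T|) x (t b).
have My0 : M *m y = 0.
  apply/matrixP => a z; rewrite !mxE; apply: etrans (Jzero (r a) (enum_valP _)).
  by rewrite (big_enum_val (A := mem T)); apply: eq_bigr => b _; rewrite !mxE.
have M_unit : M \in unitmx by rewrite unitmxE unitfE; exact: hgen enum_val_inj.
have y0 : y = 0 by rewrite -(mulKmx M_unit y) My0 mulmx0.
have := congr1 (fun m : 'cV[C]_#|T| => m (enum_rank_in Ti i) ord0) y0.
by rewrite !mxE /t enum_rankK_in.
Qed.

Section OneShotDelivery.

Variables (C : fieldType) (KR KT : nat) (P : finType) (h : 'M[C]_(KR, KT)).
Variables (cacheT : 'I_KT -> {set P}) (cacheR : 'I_KR -> {set P}).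
Variables (L : nat) (pk : 'I_L -> P) (v : 'I_KT -> P -> C).

Lemma rx_coef_scheduled (j : 'I_KR) (l : 'I_L) :
  rx_coef h cacheT pk v j (pk l)
  = \sum_(i in [set i | pk l \in cacheT i]) h j i * v i (pk l).
Proof.
rewrite /rx_coef [RHS]big_mkcond; apply: eq_bigr => i _.
by rewrite /tx_coef inE imset_f // andbT; case: ifP; rewrite ?mulr0.
Qed.

Lemma decodes_uncached_coef (j : 'I_KR) (q p : P) :
  decodes h cacheT cacheR pk v j q -> p \notin cacheR j ->
  rx_coef h cacheT pk v j p = (p == q)%:R.
Proof.
by move=> [u [c [-> dec]]] /negbTE p_uncached; have := dec p;
  rewrite p_uncached addr0 mul1r.
Qed.

End OneShotDelivery.

Theorem lemma3 (R : rcfType) (KT KR : nat) (P : finType)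
    (h : 'M[R[i]]_(KR, KT))
    (cacheT : 'I_KT -> {set P}) (cacheR : 'I_KR -> {set P})
    (L : nat) (pk : 'I_L -> P) (rx : 'I_L -> 'I_KR) :
  generic_channel h ->
  injective pk ->
  injective rx ->
  (forall l : 'I_L, pk l \notin cacheR (rx l)) ->
  (exists v : 'I_KT -> P -> R[i],
      forall l : 'I_L, decodes h cacheT cacheR pk v (rx l) (pk l)) ->
  forall l : 'I_L,
    (L <= #|[set i : 'I_KT | pk l \in cacheT i]|
          + #|[set j : 'I_KR | pk l \in cacheR j]|)%N.
Proof.
move=> hgen pk_inj rx_inj uncached [v dec] l.
set T := [set i | pk l \in cacheT i]; set RR := [set j | pk l \in cacheR j].
set S := [set l' | pk l \notin cacheR (rx l')] :\ l.
have coef_l : rx_coef h cacheT pk v (rx l) (pk l) = 1.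
  by rewrite (decodes_uncached_coef (dec l) (uncached l)) eqxx.
have coef_S l' : l' \in S -> rx_coef h cacheT pk v (rx l') (pk l) = 0.
  rewrite !inE => /andP[l'_ne_l uncached'].
  by rewrite (decodes_uncached_coef (dec l') uncached') (inj_eq pk_inj) eq_sym
    (negbTE l'_ne_l).
have cardS : (L <= #|RR| + #|S|.+1)%N.
  set U := [set l' | pk l \notin cacheR (rx l')].
  have cachedE : ~: U = rx @^-1: RR by apply/setP => l'; rewrite !inE negbK.
  have := cardsC U; rewrite cachedE card_ord (cardsD1 l) !inE uncached /=.
  move=> cardL; apply: leq_trans (eq_leq (esym cardL)) _.
  by rewrite addnC add1n leq_add2r; exact: card_preimset_leq.
rewrite leqNgt; apply/negP => TR_lt_L.
have T_le_J : (#|T| <= #|rx @: S|)%N by rewrite card_imset //; lia.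
have v0 := generic_channel_zero_forcing hgen T_le_J.
have /eqP := coef_l; rewrite rx_coef_scheduled big1 => [|i Ti].
  by rewrite eq_sym oner_eq0.
rewrite (v0 (fun i => v i (pk l))) ?mulr0 // => _ /imsetP[l' l'S ->].
by rewrite -rx_coef_scheduled coef_S.
Qed.
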